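(* For every $x>0$, $$x\,e^{-x^2/6}<\sqrt{2\pi}\Big(\Phi(x)-\frac12\Big)<x\,e^{-x^2/6+x^4/90}.$$
   Context: $\Phi$ is the standard normal distribution function. *)

From Stdlib Require Import Reals.
From Coquelicot Require Import Coquelicot.
Open Scope R_scope.

Definition std_normal_pdf (t : R) : R := / sqrt (2 * PI) * exp (- t ^ 2 / 2).

Definition Phi (x : R) : R :=
  RInt_gen std_normal_pdf (Rbar_locally m_infty) (at_point x).

(* Write F(x) = \int_0^x e^{-t^2/2} dt, so that sqrt(2 pi) (Phi(x) - 1/2) = F(x) by
   the Gaussian integral and the evenness of the density. Each bound minus F (or F minus
   it) vanishes at 0 and has a positive derivative on (0, x). For the lower bound,
   (x e^{-x^2/6})' = (1 - x^2/3) e^{-x^2/6} < e^{-x^2/2} because e^{-x^2/3} > 1 - x^2/3.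
   For the upper bound, (x e^{-x^2/6 + x^4/90})' = (1 - x^2/3 + 2x^4/45) e^{-x^2/6 + x^4/90},
   and k(x) = e^{x^2/3 + x^4/90} (1 - x^2/3 + 2x^4/45) exceeds 1 = k(0) because
   k'(x) = e^{x^2/3 + x^4/90} (2x^5/135 + 4x^7/2025) > 0.
   The value \int_0^oo e^{-t^2} dt = sqrt(pi)/2 comes from MathComp-Analysis; it is moved
   to Coquelicot's Riemann integral by the fundamental theorem of calculus, and the two
   pi's are identified as 4 atan 1 = 4 \int_0^1 dt / (1 + t^2). *)

From Stdlib Require Import Reals Lra.
From Coquelicot Require Import Coquelicot.
From mathcomp Require Import ssreflect ssrfun ssrbool.
From mathcomp Require all_boot all_algebra classical_sets boolp reals ereal.
From mathcomp Require Rstruct Rstruct_topology topology normedtype derive realfun measure.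
From mathcomp Require lebesgue_measure lebesgue_integral ftc trigo gauss_integral.

Lemma is_derive_RInt_continuity_pt (f : R -> R) (a x : R) : (forall t, continuity_pt f t) ->
  is_derive (fun y => RInt f a y) x (f x).
Proof.
move=> cf; apply: (is_derive_RInt f _ a); last exact/continuity_pt_filterlim.
exists (mkposreal 1 Rlt_0_1) => y _.
by apply: RInt_correct; apply: ex_RInt_continuous => z _; exact/continuity_pt_filterlim.
Qed.

Lemma ex_RInt_continuity_pt (f : R -> R) (a b : R) : (forall t, continuity_pt f t) ->
  ex_RInt f a b.
Proof. by move=> cf; apply: ex_RInt_continuous => t _; exact/continuity_pt_filterlim. Qed.

Lemma RInt_0_comp_mult (f : R -> R) (c y : R) : (forall t, continuity_pt f t) ->
  RInt f 0 (c * y) = c * RInt (fun t => f (c * t)) 0 y.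
Proof.
move=> cf.
have fc t : continuity_pt (fun s => f (c * s)) t.
  by apply: (continuity_pt_comp (fun s => c * s)); [reg | exact: cf].
have := RInt_comp_lin f c 0 0 y (ex_RInt_continuity_pt _ _ _ cf).
rewrite Rmult_0_r Rplus_0_r Rplus_0_r => <-.
rewrite (RInt_ext _ (fun t => scal c (f (c * t)))) => [|t _]; last by rewrite Rplus_0_r.
by rewrite RInt_scal //; exact: ex_RInt_continuity_pt.
Qed.

Lemma is_lim_RInt_0_m_infty_even (f : R -> R) (l : R) :
  (forall t, continuity_pt f t) -> (forall t, f (- t) = f t) ->
  is_lim (fun y => RInt f 0 y) p_infty l -> is_lim (fun y => RInt f 0 y) m_infty (- l).
Proof.
move=> cf fe fl.
have RInt_opp y : - RInt f 0 (- y) = RInt f 0 y.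
  have -> : - y = -1 * y by ring.
  rewrite RInt_0_comp_mult // (RInt_ext _ f) => [|t _]; first ring.
  by have -> : -1 * t = - t by ring; exact: fe.
apply: (is_lim_ext _ _ _ _ RInt_opp); apply: (is_lim_opp _ _ l).
apply: (is_lim_comp _ _ _ _ p_infty fl); last by exists 0.
exact: (is_lim_opp _ m_infty m_infty (is_lim_id _)).
Qed.

Lemma is_RInt_gen_m_infty_at_point (f : R -> R) (l x : R) : (forall t, continuity_pt f t) ->
  is_lim (fun y => RInt f 0 y) m_infty l ->
  is_RInt_gen f (Rbar_locally m_infty) (at_point x) (RInt f 0 x - l).
Proof.
move=> cf fl.
have dF t := is_derive_RInt_continuity_pt f 0 t cf.
have DF t : Derive (fun y => RInt f 0 y) t = f t := is_derive_unique _ _ _ (dF t).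
apply: (is_RInt_gen_ext (Derive (fun y => RInt f 0 y))).
  by apply: filter_forall => ab t _; exact: DF.
apply: is_RInt_gen_Derive.
- by apply: filter_forall => ab t _; exists (f t).
- apply: filter_forall => ab t _; apply: (continuous_ext f) => [y|]; first by rewrite DF.
  exact/continuity_pt_filterlim.
- exact: fl.
- by move=> P /locally_singleton.
Qed.

Lemma sqrt_2PI_gt0 : 0 < sqrt (2 * PI).
Proof. by apply: sqrt_lt_R0; have := PI_RGT_0; lra. Qed.

Lemma pos_of_derive_pos (f f' : R -> R) (x : R) : 0 < x -> f 0 = 0 ->
  (forall c, 0 <= c <= x -> is_derive f c (f' c)) ->
  (forall c, 0 < c < x -> 0 < f' c) -> 0 < f x.
Proof.
move=> x0 f0 df f'_pos.
have [c [fx c0x]] :=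
  MVT_cor2 f f' 0 x x0 (fun c hc => proj1 (is_derive_Reals _ _ _) (df c hc)).
rewrite f0 !Rminus_0_r in fx; rewrite fx.
by apply: Rmult_lt_0_compat => //; apply: f'_pos.
Qed.

(* MathComp-Analysis is imported only inside this module: its [is_derive], [continuous]
   and scopes would shadow Coquelicot's and Stdlib's in the rest of the file. *)
Module GaussianIntegral.
Import all_boot all_algebra classical_sets boolp reals ereal Rstruct.
Import Rstruct_topology topology normedtype derive realfun measure.
Import lebesgue_measure lebesgue_integral ftc trigo gauss_integral.
Import GRing.Theory Num.Theory numFieldNormedType.Exports.
Local Open Scope classical_set_scope.
Local Open Scope ring_scope.

Lemma derivable_pt_lim_derive1 (F : R -> R) (x l : R) : derivable_pt_lim F x l ->
  @derivable _ R^o R^o F x 1 /\ @derive1 _ R^o F x = l.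
Proof.
move=> Fl.
(* [Fl] says exactly that the difference quotient, extended by [l] at [0], is
   continuous at [0]. *)
pose q h := if h == 0 then l else h^-1 * (F (h + x) - F x).
have q0 : continuity_pt q 0.
  move=> e e0; have [d Hd] := Fl e e0.
  exists d; split=> [|h [[_ h0] hd]]; first exact: cond_pos.
  have h0' := nesym h0.
  rewrite /q eqxx (negbTE (introN eqP h0')) /= /R_dist.
  have := Hd h h0'; rewrite /Rdiv Rmult_comm (Rplus_comm x); apply.
  by move: hd; rewrite /= /R_dist Rminus_0_r.
have dq : h^-1 * (F (h + x) - F x) @[h --> (0 : R)^'] --> l.
  move/continuity_pt_cvg' : q0; rewrite {2}/q eqxx; apply: cvg_trans.
  apply: near_eq_cvg; near=> h; rewrite /q ifF //.
  by apply/negbTE; near: h; exact: nbhs_dnbhs_neq.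
split; last by rewrite /derive1; exact: cvg_lim.
apply/cvg_ex; exists l; apply: cvg_trans dq.
by apply: near_eq_cvg; near=> h; rewrite /= -[h%:A]/(h * 1) mulr1.
Unshelve. all: by end_near.
Qed.

Lemma integral_itv_RInt (f : R -> R) (a b : R) : a < b ->
  (forall t, continuity_pt f t) ->
  (\int[lebesgue_measure]_(t in `[a, b]) (f t)%:E)%E = (RInt f a b)%:E.
Proof.
move=> ab cf.
have dF y := proj1 (is_derive_Reals _ _ _) (is_derive_RInt_continuity_pt f a y cf).
have Fd y := proj1 (derivable_pt_lim_derive1 _ _ _ (dF y)).
have Ff y := proj2 (derivable_pt_lim_derive1 _ _ _ (dF y)).
have cF y : continuity_pt (fun z => RInt f a z) y.
  by apply: derivable_continuous_pt; exists (f y); exact: dF.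
rewrite (@continuous_FTC2 R f (fun z => RInt f a z) a b ab).
- by rewrite RInt_point -EFinD subr0.
- by apply: continuous_subspaceT => t; apply/continuity_pt_cvg.
- split; first by move=> y _; exact: Fd.
  + by apply: cvg_at_right_filter; apply/continuity_pt_cvg.
  + by apply: cvg_at_left_filter; apply/continuity_pt_cvg.
- by move=> y _; exact: Ff.
Qed.

Lemma pi_PI : pi = PI.
Proof.
have oneDsqrVE t : (oneDsqr t)^-1 = Rinv (Rplus 1 (pow t 2)).
  by rewrite /oneDsqr RinvE RpowE.
have cf t : continuity_pt (fun x => (oneDsqr x)^-1) t.
  by apply/continuity_pt_cvg; exact: continuous_oneDsqrV.
have atanE : is_RInt (fun x => (oneDsqr x)^-1) 0 1 (Rminus (Ratan.atan 1) (Ratan.atan 0)).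
  apply: (is_RInt_ext (fun x => Rinv (Rplus 1 (pow x 2)))) => [x _|].
    by rewrite oneDsqrVE.
  apply: is_RInt_derive => x _; first exact/is_derive_Reals/derivable_pt_lim_atan.
  exact/continuity_pt_filterlim/(continuity_pt_ext _ _ _ oneDsqrVE).
have := @integral0_oneDsqr R 1 ler01.
rewrite /Rintegral integral_itv_RInt // (is_RInt_unique _ _ _ _ atanE) /=.
rewrite atan1 Ratan.atan_1 Ratan.atan_0 RminusE subr0 => pi4.
apply: (@mulIf _ 4^-1).
  by rewrite invr_eq0 pnatr_eq0.
by rewrite -pi4 RdivE IZRposE INRE.
Qed.

Lemma cvg_pinfty_filterlim (f : R -> R^o) (l : R^o) : f x @[x --> +oo] --> l ->
  filterlim f (Rbar_locally p_infty) (locally l).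
Proof.
move=> fl0; have fl := proj1 (cvgrPdist_lt _ _) fl0.
apply/filterlim_locally => e.
have e0 : 0 < pos e by apply/RltP; exact: cond_pos.
have [M [_ fMl]] := fl _ _ e0.
exists M => x /RltP Mx; change (Rlt (Rabs (Rplus (f x) (Ropp l))) (pos e)).
by apply/RltP; rewrite RabsE distrC; exact: fMl.
Qed.

Lemma cvg_integral0_gauss :
  @gauss_integral_proof.integral0_gauss R x @[x --> +oo] --> Num.sqrt pi / 2.
Proof.
have sqrI x : Num.sqrt (gauss_integral_proof.integral0_gauss x ^+ 2) =
    gauss_integral_proof.integral0_gauss x :> R.
  by rewrite sqrtr_sqr ger0_norm // gauss_integral_proof.integral0_gauss_ge0.
have -> : Num.sqrt pi / 2 = Num.sqrt (pi / 4) :> R.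
  rewrite sqrtrM ?pi_ge0 // sqrtrV // (_ : 4 = 2 ^+ 2) ?sqrtr_sqr ?ger0_norm //.
  by rewrite expr2 -natrM.
under eq_fun do rewrite -sqrI.
by apply: continuous_cvg => //;
  [exact: sqrt_continuous | exact: gauss_integral_proof.cvg_integral0_gauss_sqr].
Qed.

Local Open Scope R_scope.

Lemma is_lim_RInt_gauss :
  is_lim (fun y => RInt (fun t => exp (- t ^ 2)) 0 y) p_infty (sqrt PI / 2).
Proof.
apply: cvg_pinfty_filterlim.
have cg t : continuity_pt (@gauss_fun R) t.
  by apply/continuity_pt_cvg; exact: continuous_gauss_fun.
rewrite RsqrtE -pi_PI RdivE IZRposE INRE /=.
apply: cvg_trans cvg_integral0_gauss.
apply: near_eq_cvg; near=> x.
have x0 : 0 < x by near: x; exists 0; split=> [|y /RltP //]; exact: num_real.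
rewrite /gauss_integral_proof.integral0_gauss /Rintegral.
rewrite (integral_itv_RInt _ _ _ (introT RltP x0) cg).
by apply: RInt_ext => t _; rewrite /gauss_fun RexpE -[t * (t * 1)]/(t ^ 2) RpowE.
Unshelve. all: by end_near.
Qed.

End GaussianIntegral.

Import GaussianIntegral.

Definition normal_kernel (t : R) : R := exp (- t ^ 2 / 2).

Lemma continuity_pt_normal_kernel t : continuity_pt normal_kernel t.
Proof.
apply: derivable_continuous_pt; apply: ex_derive_Reals_0.
by rewrite /normal_kernel; auto_derive.
Qed.

Lemma is_lim_RInt_normal_kernel :
  is_lim (fun y => RInt normal_kernel 0 y) p_infty (sqrt (2 * PI) / 2).
Proof.
have s2 : 0 < sqrt 2 by apply: sqrt_lt_R0; lra.
have cg t : continuity_pt (fun s => exp (- s ^ 2)) t.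
  by apply: derivable_continuous_pt; apply: ex_derive_Reals_0; auto_derive.
have scale y :
    RInt normal_kernel 0 y = sqrt 2 * RInt (fun t => exp (- t ^ 2)) 0 (/ sqrt 2 * y).
  rewrite RInt_0_comp_mult // (RInt_ext _ normal_kernel) => [|t _].
    by rewrite -Rmult_assoc Rinv_r ?Rmult_1_l //; lra.
  rewrite /normal_kernel Rpow_mult_distr pow_inv /= Rmult_1_r sqrt_sqrt; [|lra].
  by congr exp; field.
apply: (is_lim_ext _ _ _ _ (fun y => esym (scale y))).
have -> : sqrt (2 * PI) / 2 = sqrt 2 * (sqrt PI / 2).
  by rewrite sqrt_mult; [field | lra | have := PI_RGT_0; lra].
apply: (is_lim_scal_l _ _ _ (sqrt PI / 2)).
apply: (is_lim_comp _ _ _ _ p_infty is_lim_RInt_gauss); last by exists 0.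
move=> P [M PM]; exists (M * sqrt 2) => y My; apply: PM.
by apply: (Rmult_lt_reg_r (sqrt 2)) => //; field_simplify; lra.
Qed.

Lemma RInt_std_normal_pdf y :
  RInt std_normal_pdf 0 y = / sqrt (2 * PI) * RInt normal_kernel 0 y.
Proof.
exact: (RInt_scal normal_kernel 0 y _
  (ex_RInt_continuity_pt _ _ _ continuity_pt_normal_kernel)).
Qed.

Lemma Phi_RInt x : Phi x = 1 / 2 + / sqrt (2 * PI) * RInt normal_kernel 0 x.
Proof.
have sqrt2PI := sqrt_2PI_gt0.
have cpdf t : continuity_pt std_normal_pdf t.
  exact: continuity_pt_scal (continuity_pt_normal_kernel t).
have pdf_even t : std_normal_pdf (- t) = std_normal_pdf t.
  by rewrite /std_normal_pdf (_ : (- t) ^ 2 = t ^ 2) //; ring.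
have pdf_lim : is_lim (fun y => RInt std_normal_pdf 0 y) p_infty (1 / 2).
  apply: (is_lim_ext _ _ _ _ (fun y => esym (RInt_std_normal_pdf y))).
  have -> : 1 / 2 = / sqrt (2 * PI) * (sqrt (2 * PI) / 2) by field; lra.
  exact: (is_lim_scal_l _ _ _ (sqrt (2 * PI) / 2) is_lim_RInt_normal_kernel).
have := is_RInt_gen_m_infty_at_point _ _ x cpdf
  (is_lim_RInt_0_m_infty_even _ _ cpdf pdf_even pdf_lim).
rewrite RInt_std_normal_pdf => /is_RInt_gen_unique; rewrite /Phi => ->; ring.
Qed.

Lemma normal_kernel_gt c : c <> 0 -> (1 - c ^ 2 / 3) * exp (- c ^ 2 / 6) < normal_kernel c.
Proof.
move=> c0.
have c2 : 0 < c ^ 2 by apply: pow2_gt_0.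
have e6 := exp_pos (- c ^ 2 / 6).
have e3 : 1 + - c ^ 2 / 3 < exp (- c ^ 2 / 3) by apply: exp_ineq1; lra.
rewrite /normal_kernel (_ : - c ^ 2 / 2 = - c ^ 2 / 6 + - c ^ 2 / 3); last by field.
rewrite exp_plus; nra.
Qed.

Lemma one_lt_exp_poly c : 0 < c ->
  1 < exp (c ^ 2 / 3 + c ^ 4 / 90) * (1 - c ^ 2 / 3 + 2 * c ^ 4 / 45).
Proof.
move=> c0.
pose F s := exp (s ^ 2 / 3 + s ^ 4 / 90) * (1 - s ^ 2 / 3 + 2 * s ^ 4 / 45) - 1.
pose F' s := exp (s ^ 2 / 3 + s ^ 4 / 90) * (2 * s ^ 5 / 135 + 4 * s ^ 7 / 2025).
suff : 0 < F c by rewrite /F; lra.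
apply: (pos_of_derive_pos F F') => // [|s _|s [s0 _]].
- by rewrite /F (_ : 0 ^ 2 / 3 + 0 ^ 4 / 90 = 0) ?exp_0; field.
- rewrite /F /F'; auto_derive => //.
  by rewrite (_ : s * (s * 1) * / 3 + s * (s * (s * (s * 1))) * / 90 =
    s ^ 2 / 3 + s ^ 4 / 90); field.
- apply: Rmult_lt_0_compat; first exact: exp_pos.
  by have := pow_lt s 5 s0; have := pow_lt s 7 s0; lra.
Qed.

Lemma normal_kernel_lt c : 0 < c ->
  normal_kernel c < exp (- c ^ 2 / 6 + c ^ 4 / 90) * (1 - c ^ 2 / 3 + 2 * c ^ 4 / 45).
Proof.
move=> c0.
have e2 := exp_pos (- c ^ 2 / 2).
rewrite /normal_kernel (_ : - c ^ 2 / 6 + c ^ 4 / 90 = - c ^ 2 / 2 + (c ^ 2 / 3 + c ^ 4 / 90)).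
  by rewrite exp_plus; have := one_lt_exp_poly c c0; nra.
by field.
Qed.

Lemma RInt_normal_kernel_gt x : 0 < x -> x * exp (- x ^ 2 / 6) < RInt normal_kernel 0 x.
Proof.
move=> x0.
pose F y := RInt normal_kernel 0 y - y * exp (- y ^ 2 / 6).
pose F' c := normal_kernel c - (1 - c ^ 2 / 3) * exp (- c ^ 2 / 6).
suff : 0 < F x by rewrite /F; lra.
apply: (pos_of_derive_pos F F') => // [|c _|c [c0 _]].
- by rewrite /F RInt_point /zero /=; ring.
- apply: is_derive_minus; first
    exact: is_derive_RInt_continuity_pt continuity_pt_normal_kernel.
  auto_derive => //.
  by rewrite (_ : - (c * (c * 1)) * / 6 = - c ^ 2 / 6); field.
- by have := normal_kernel_gt c (Rgt_not_eq _ _ c0); rewrite /F'; lra.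
Qed.

Lemma RInt_normal_kernel_lt x : 0 < x ->
  RInt normal_kernel 0 x < x * exp (- x ^ 2 / 6 + x ^ 4 / 90).
Proof.
move=> x0.
pose F y := y * exp (- y ^ 2 / 6 + y ^ 4 / 90) - RInt normal_kernel 0 y.
pose F' c :=
  exp (- c ^ 2 / 6 + c ^ 4 / 90) * (1 - c ^ 2 / 3 + 2 * c ^ 4 / 45) - normal_kernel c.
suff : 0 < F x by rewrite /F; lra.
apply: (pos_of_derive_pos F F') => // [|c _|c [c0 _]].
- by rewrite /F RInt_point /zero /=; ring.
- apply: is_derive_minus; last
    exact: is_derive_RInt_continuity_pt continuity_pt_normal_kernel.
  auto_derive => //.
  by rewrite (_ : - (c * (c * 1)) * / 6 + c * (c * (c * (c * 1))) * / 90 =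
    - c ^ 2 / 6 + c ^ 4 / 90); field.
- by have := normal_kernel_lt c c0; rewrite /F'; lra.
Qed.

Theorem lemma3p2 (x : R) (hx : 0 < x) :
  x * exp (- x ^ 2 / 6) < sqrt (2 * PI) * (Phi x - 1 / 2) /\
  sqrt (2 * PI) * (Phi x - 1 / 2) < x * exp (- x ^ 2 / 6 + x ^ 4 / 90).
Proof.
have sqrt2PI := sqrt_2PI_gt0.
have -> : sqrt (2 * PI) * (Phi x - 1 / 2) = RInt normal_kernel 0 x.
  by rewrite Phi_RInt; field; lra.
split; [exact: RInt_normal_kernel_gt | exact: RInt_normal_kernel_lt].
Qed.
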